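(* Let $\mathbf A\in\mathbb C^{m\times n}$ with $\operatorname{rank}\mathbf A=r$, where $r<\min\{m,n\}$ or $r=m<n$. Then the projection matrix $\mathbf P=\mathbf A^{+}\mathbf A\in\mathbb C^{n\times n}$ has entries \[ (\mathbf P)_{ij}=\frac{p_{ij}}{d_r(\mathbf A^{*}\mathbf A)},\qquad p_{ij}=\sum_{\beta\in J_{r,n}\{i\}}\left|\left((\mathbf A^{*}\mathbf A)_{.i}(\mathbf d_{.j})\right)^{\beta}_{\beta}\right|,\quad i,j=1,\dots,n,\] where $\mathbf d_{.j}$ is the $j$-th column of $\mathbf A^{*}\mathbf A$.
   Context: $\mathbf A^{+}$ is the Moore–Penrose inverse (unique $\mathbf X$ with $\mathbf A\mathbf X\mathbf A=\mathbf A$, $\mathbf X\mathbf A\mathbf X=\mathbf X$, $(\mathbf A\mathbf X)^{*}=\mathbf A\mathbf X$, $(\mathbf X\mathbf A)^{*}=\mathbf X\mathbf A$). $\mathbf M_{.i}(\mathbf c)$ denotes $\mathbf M$ with its $i$-th column replaced by $\mathbf c$. $J_{r,n}$ is the set of strictly increasing sequences of $r$ elements of $\{1,\dots,n\}$, $J_{r,n}\{i\}=\{\beta\in J_{r,n}:i\in\beta\}$, $\mathbf M^{\beta}_{\beta}$ is the principal submatrix indexed by $\beta$, $|\cdot|$ is the determinant, and $d_r(\mathbf M)=\sum_{\beta\in J_{r,n}}|\mathbf M^{\beta}_{\beta}|$. *)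

From HB Require Import structures.
From mathcomp Require Import all_boot all_order all_algebra.
Set Implicit Arguments. Unset Strict Implicit. Unset Printing Implicit Defensive.
Import Order.TTheory GRing.Theory Num.Theory.
Local Open Scope ring_scope.

Definition ctmx (C : numClosedFieldType) m n (A : 'M[C]_(m, n)) : 'M[C]_(n, m) :=
  (map_mx (fun z => z^*) A)^T.

Definition is_MP_inverse (C : numClosedFieldType) m n
    (A : 'M[C]_(m, n)) (X : 'M[C]_(n, m)) : Prop :=
  [/\ A *m X *m A = A, X *m A *m X = X,
      ctmx (A *m X) = A *m X & ctmx (X *m A) = X *m A].

(* J_{r,n}: strictly increasing maps 'I_r -> 'I_n (0-based indices). *)
Definition incr_seq r n (f : {ffun 'I_r -> 'I_n}) : bool :=
  [forall k : 'I_r, forall l : 'I_r, (k < l)%N ==> (f k < f l)%N].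

Definition princ_sub (C : numClosedFieldType) r n (M : 'M[C]_n)
    (f : {ffun 'I_r -> 'I_n}) : 'M[C]_r := mxsub f f M.

Definition col_replace (C : numClosedFieldType) m n (M : 'M[C]_(m, n))
    (i : 'I_n) (c : 'cV[C]_m) : 'M[C]_(m, n) :=
  \matrix_(k, l) (if l == i then c k ord0 else M k l).

Definition d_r (C : numClosedFieldType) n (r : nat) (M : 'M[C]_n) : C :=
  \sum_(f : {ffun 'I_r -> 'I_n} | incr_seq f) \det (princ_sub M f).

Definition p_entry (C : numClosedFieldType) m n (r : nat) (A : 'M[C]_(m, n))
    (i j : 'I_n) : C :=
  let D := ctmx A *m A in
  \sum_(f : {ffun 'I_r -> 'I_n} | incr_seq f && (i \in codom f))
     \det (princ_sub (col_replace D i (col j D)) f).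

From mathcomp Require Import all_boot all_order all_algebra all_fingroup.
From mathcomp Require Import zify.
Import GRing.Theory Num.Theory.
Set Implicit Arguments. Unset Strict Implicit.
Local Open Scope ring_scope.

(* Put D := A^* A, of rank r, and s := n - r.  Write
   adj (D + x I) = \sum_k x^k B_k  and  det (D + x I) = \sum_k c_k x^k,
   where c_k is the sum of the principal minors of D of order n - k.
   Comparing coefficients in  adj (D + x I) (D + x I) = det (D + x I) I  gives
   B_k D + B_(k-1) = c_k I.  Minors of order > r of D vanish, so c_k = 0 for
   k < s; the entries of B_k are principal minors of order n - k of matrices of
   rank <= r + 1, so B_k = 0 for k < s - 1.  Hence B_(s-1) D = 0 and
   B_s D = c_s I - B_(s-1).  Multiplying on the right by P = A^+ A, for which
   D P = D and P = D A^+ (A^+)^*, kills B_(s-1) and gives B_s D = d_r(D) P;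
   Cramer's rule identifies the entries of B_s D with the p_ij.  Finally
   d_r(D) = c_s is nonzero because D is normal of rank r: diagonalising it,
   det (D + x I) = \prod_i (x + mu_i) with exactly s of the mu_i equal to 0. *)

Lemma cardsC_ord n (S : {set 'I_n}) : #|~: S| = (n - #|S|)%N.
Proof. by have := cardsC S; rewrite card_ord; lia. Qed.

(* [\det (principal_mx S M)] is the principal minor of [M] indexed by [S]. *)
Definition principal_mx (R : pzRingType) n (S : {set 'I_n}) (M : 'M[R]_n) :
    'M[R]_n :=
  \matrix_(a, b) if a \in S then (if b \in S then M a b else 0) else (a == b)%:R.

Lemma map_principal_mx (R R' : nzRingType) (f : {rmorphism R -> R'}) n
    (S : {set 'I_n}) (M : 'M[R]_n) :
  map_mx f (principal_mx S M) = principal_mx S (map_mx f M).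
Proof.
apply/matrixP => a b; rewrite !mxE.
by case: (a \in S); case: (b \in S); rewrite ?rmorph0 ?rmorph_nat.
Qed.

Lemma prod_principal_split (R : comPzRingType) n (J : {set 'I_n})
    (M : 'M[R]_n) (x : 'I_n -> R) (s : 'S_n) :
  \prod_i (if i \in J then M i (s i) else (i == s i)%:R * x i) =
  (\prod_(a in ~: J) x a) * \prod_i principal_mx J M i (s i).
Proof.
have [fixJ|] := boolP [forall i, (i \notin J) ==> (s i == i)].
  have sJ i : i \in J -> s i \in J.
    move=> iJ; apply/negPn/negP => siJ.
    have /eqP/perm_inj sii := implyP (forallP fixJ (s i)) siJ.
    by move: siJ; rewrite sii iJ.
  rewrite (bigID (mem J)) /= [X in _ = _ * X](bigID (mem J)) /=.
  rewrite [X in _ = _ * (_ * X)]big1; last first.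
    by move=> i iJ; rewrite mxE (negbTE iJ) (eqP (implyP (forallP fixJ i) iJ)) eqxx.
  rewrite mulr1 mulrC; congr (_ * _).
  - apply: eq_big => [i|i iJ]; first by rewrite inE.
    by rewrite (negbTE iJ) (eqP (implyP (forallP fixJ i) iJ)) eqxx mul1r.
  - by apply: eq_bigr => i iJ; rewrite iJ mxE iJ sJ.
move/forallPn => [i0]; rewrite negb_imply => /andP [i0J si0].
rewrite (bigD1 i0) //= [X in _ = _ * X](bigD1 i0) //= (negbTE i0J) mxE (negbTE i0J).
by rewrite eq_sym (negbTE si0) !mul0r mulr0.
Qed.

Lemma det_add_diag (R : comPzRingType) n (M : 'M[R]_n) (x : 'I_n -> R) :
  \det (M + diag_mx (\row_a x a)) =
  \sum_(S : {set 'I_n}) (\prod_(a in ~: S) x a) * \det (principal_mx S M).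
Proof.
rewrite /determinant.
under eq_bigr => s _.
  rewrite (eq_bigr (fun i => M i (s i) + (i == s i)%:R * x i)); last first.
    by move=> i _; rewrite !mxE mulr_natl.
  rewrite bigA_distr big_distrr /=.
  over.
rewrite exchange_big /=; apply: eq_bigr => J _.
rewrite big_distrr /=; apply: eq_bigr => s _.
by rewrite prod_principal_split mulrCA.
Qed.

Lemma mxrank_diag_le (F : fieldType) n (d : 'rV[F]_n) :
  (\rank (diag_mx d) <= #|[set i | d ord0 i != 0%R]|)%N.
Proof.
rewrite diag_mx_sum_delta (bigID (mem [set i | d ord0 i != 0%R])) /=.
rewrite [X in (_ + X)%R]big1 ?addr0; last first.
  by move=> i; rewrite inE negbK => /eqP ->; rewrite scale0r.
rewrite -sum1_card.
elim/big_rec2: _ => [|i k Y _ IH]; first by rewrite mxrank0.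
apply: leq_trans (mxrank_add _ _) _; rewrite leq_add //.
by rewrite -mul_scalar_mx (leq_trans (mxrankM_maxr _ _)) ?mxrank_delta.
Qed.

Lemma principal_mxE (F : fieldType) n (S : {set 'I_n}) (M : 'M[F]_n) :
  principal_mx S M = diag_mx (\row_a (a \in S)%:R) *m M *m diag_mx (\row_a (a \in S)%:R)
                     + diag_mx (\row_a (a \notin S)%:R).
Proof.
apply/matrixP => a b; rewrite mul_diag_mx mul_mx_diag !mxE.
by case: (a \in S); case: (b \in S); rewrite /= ?mul1r ?mulr1 ?mul0r ?mulr0
  ?mul0rn ?add0r ?addr0.
Qed.

Lemma det_principal_mx_rank (F : fieldType) n (S : {set 'I_n}) (M : 'M[F]_n) :
  (\rank M < #|S|)%N -> \det (principal_mx S M) = 0.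
Proof.
move=> rM; apply/eqP; apply/negPn/negP => det_neq0.
have /mxrank_unit : principal_mx S M \in unitmx by rewrite unitmxE unitfE.
rewrite principal_mxE => full.
have : (n <= \rank M + #|~: S|)%N.
  rewrite -{1}full; apply: leq_trans (mxrank_add _ _) _; apply: leq_add.
    by apply: leq_trans (mxrankM_maxl _ _) _; apply: mxrankM_maxr.
  apply: leq_trans (mxrank_diag_le _) _; apply: subset_leq_card.
  by apply/subsetP => a; rewrite !inE mxE; case: (a \in S); rewrite ?eqxx ?oner_eq0.
rewrite -{1}(card_ord n) -(cardsC S); lia.
Qed.

Lemma det_mxsub_perm (R : comPzRingType) n (g : 'I_n -> 'I_n) (M : 'M[R]_n) :
  injective g -> \det (mxsub g g M) = \det M.
Proof.
move=> g_inj; set s := perm g_inj.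
have -> : mxsub g g M = row_perm s (col_perm s M).
  by apply/matrixP => i j; rewrite !mxE !permE.
rewrite row_permE col_permE !det_mulmx !det_perm odd_permV mulrCA.
by rewrite -expr2 sqrr_sign mulr1.
Qed.

Lemma det_mxsub_principal (R : comPzRingType) r n (f : 'I_r -> 'I_n)
    (M : 'M[R]_n) :
  injective f -> \det (mxsub f f M) = \det (principal_mx [set x in codom f] M).
Proof.
move=> f_inj; set S := [set x in codom f].
have cS : #|~: S| = (n - r)%N.
  have cardS : #|S| = r by rewrite cardsE card_codom // card_ord.
  by rewrite cardsC_ord cardS.
pose c (j : 'I_(n - r)) : 'I_n := enum_val (cast_ord (esym cS) j).
have cNS j : c j \notin S by have := enum_valP (cast_ord (esym cS) j); rewrite inE.
have fS a : f a \in S by rewrite inE codom_f.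
have c_inj : injective c by move=> j j' /enum_val_inj /cast_ord_inj.
pose g (x : 'I_(r + (n - r))) : 'I_n :=
  match split x with inl a => f a | inr b => c b end.
have g_inj : injective g.
  move=> x y; rewrite -(splitK x) -(splitK y) /g !unsplitK.
  case: (split x) => [a|b]; case: (split y) => [a'|b'] /= gxy.
  - by rewrite (f_inj _ _ gxy).
  - by move: (fS a); rewrite gxy (negbTE (cNS b')).
  - by move: (fS a'); rewrite -gxy (negbTE (cNS b)).
  - by rewrite (c_inj _ _ gxy).
have rn : (r <= n)%N by have := leq_card f f_inj; rewrite !card_ord.
have E : (r + (n - r))%N = n by rewrite subnKC.
have -> : \det (principal_mx S M) = \det (mxsub g g (principal_mx S M)).
  move: g g_inj; rewrite E => g g_inj; exact/esym/det_mxsub_perm.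
have -> : mxsub g g (principal_mx S M) = block_mx (mxsub f f M) 0 0 1%:M.
  apply/matrixP => x y; rewrite -(splitK x) -(splitK y) mxE /g !unsplitK.
  case: (split x) => [a|b]; case: (split y) => [a'|b'] /=;
    rewrite ?block_mxEul ?block_mxEur ?block_mxEdl ?block_mxEdr !mxE
      ?fS ?(negbTE (cNS _)) //.
  - by case: eqP => // cf; move: (cNS b); rewrite cf fS.
  - by rewrite (inj_eq c_inj).
by rewrite det_ublock det1 mulr1.
Qed.

Lemma incr_seq_inj r n (f : {ffun 'I_r -> 'I_n}) : incr_seq f -> injective f.
Proof.
move=> f_incr k l fkl; apply: val_inj; case: (ltngtP k l) => // kl.
- by have := implyP (forallP (forallP f_incr k) l) kl; rewrite fkl ltnn.
- by have := implyP (forallP (forallP f_incr l) k) kl; rewrite fkl ltnn.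
Qed.

Definition ord_lt n : rel 'I_n := fun a b => (a < b)%N.

Lemma ord_lt_trans n : transitive (@ord_lt n).
Proof. by move=> a b c; apply: ltn_trans. Qed.

Lemma ord_lt_irr n : irreflexive (@ord_lt n).
Proof. by move=> a; apply: ltnn. Qed.

Lemma sorted_enum_set n (S : {set 'I_n}) : sorted (@ord_lt n) (enum S).
Proof.
have -> : enum S = [seq x <- enum 'I_n | x \in S].
  by rewrite -deprecated_filter_index_enum enumT.
apply: (sorted_filter (@ord_lt_trans n)).
by have := iota_ltn_sorted 0 n; rewrite -val_enum_ord sorted_map.
Qed.

Section IncreasingSequences.
Variables (r n : nat) (r_le_n : (r <= n)%N).

Definition incr_of_set (S : {set 'I_n}) : {ffun 'I_r -> 'I_n} :=
  [ffun k : 'I_r => nth (widen_ord r_le_n k) (enum S) k].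

Lemma incr_of_set_incr (S : {set 'I_n}) : #|S| = r -> incr_seq (incr_of_set S).
Proof.
move=> cS; apply/forallP => k; apply/forallP => l; apply/implyP => kl.
rewrite !ffunE (set_nth_default (widen_ord r_le_n k) (widen_ord r_le_n l));
  last by rewrite -cardE cS.
apply: (sorted_ltn_nth (@ord_lt_trans n) _ (sorted_enum_set S)) => //;
  by rewrite inE -cardE cS.
Qed.

Lemma incr_of_setK (S : {set 'I_n}) :
  #|S| = r -> [set x in codom (incr_of_set S)] = S.
Proof.
move=> cS; apply/setP => x; rewrite inE -[x \in S]mem_enum; apply/idP/idP.
  by case/codomP=> k ->; rewrite ffunE mem_nth // -cardE cS.
move=> xS; have xr : (index x (enum S) < r)%N by rewrite -cS cardE index_mem.
by rewrite (_ : x = incr_of_set S (Ordinal xr)) ?codom_f // ffunE /= nth_index.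
Qed.

Lemma codom_setK (f : {ffun 'I_r -> 'I_n}) :
  incr_seq f -> incr_of_set [set x in codom f] = f.
Proof.
move=> f_incr; rewrite /incr_of_set.
have -> : enum [set x in codom f] = codom f.
  apply: (irr_sorted_eq (@ord_lt_trans n) (@ord_lt_irr n)).
  - exact: sorted_enum_set.
  - rewrite codomE; apply: (homo_sorted (e := @ord_lt r)).
      by move=> k l kl; apply: (implyP (forallP (forallP f_incr k) l)).
    by have := iota_ltn_sorted 0 r; rewrite -val_enum_ord sorted_map.
  by move=> x; rewrite mem_enum inE.
apply/ffunP => k; rewrite ffunE codomE (nth_map k) ?size_enum_ord //.
by rewrite nth_ord_enum.
Qed.

Lemma sum_incr_minors (R : comPzRingType) (M : 'M[R]_n) (P : pred {set 'I_n}) :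
  \sum_(f : {ffun 'I_r -> 'I_n} | incr_seq f && P [set x in codom f])
     \det (mxsub f f M)
  = \sum_(S : {set 'I_n} | (#|S| == r) && P S) \det (principal_mx S M).
Proof.
rewrite [RHS](reindex_onto (fun f : {ffun 'I_r -> 'I_n} => [set x in codom f])
  incr_of_set); last first.
  by move=> S /andP [/eqP cS _]; rewrite incr_of_setK.
apply: eq_big => [f|f /andP [f_incr _]]; last first.
  by rewrite det_mxsub_principal //; apply: incr_seq_inj.
have [f_incr|f_nincr] /= := boolP (incr_seq f).
  by rewrite cardsE card_codom ?codom_setK ?card_ord ?eqxx ?andbT //;
    apply: incr_seq_inj.
case: eqP => [cS|]; rewrite ?andbF //=; case: eqP; rewrite ?andbF // => fE.
by move: f_nincr; rewrite -fE incr_of_set_incr.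
Qed.

End IncreasingSequences.

Lemma d_r_principal (C : numClosedFieldType) n r (M : 'M[C]_n) : (r <= n)%N ->
  d_r r M = \sum_(S : {set 'I_n} | #|S| == r) \det (principal_mx S M).
Proof.
move=> r_le_n; rewrite /d_r /princ_sub.
rewrite (eq_bigl (fun f => incr_seq f && predT [set x in codom f])); last first.
  by move=> f; rewrite andbT.
by rewrite sum_incr_minors //; apply: eq_bigl => S; rewrite andbT.
Qed.

(* [col_replace] over an arbitrary ring, so that it applies to polynomial
   matrices. *)
Definition replace_col (R : pzRingType) m n (M : 'M[R]_(m, n)) (i : 'I_n)
    (c : 'cV[R]_m) : 'M[R]_(m, n) :=
  \matrix_(k, l) (if l == i then c k ord0 else M k l).

Lemma p_entry_principal (C : numClosedFieldType) m n r (A : 'M[C]_(m, n)) i j :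
  (r <= n)%N ->
  let D := ctmx A *m A in
  p_entry r A i j = \sum_(S : {set 'I_n} | (i \in S) && (#|S| == r))
                       \det (principal_mx S (replace_col D i (col j D))).
Proof.
move=> r_le_n D; rewrite /p_entry /princ_sub -/D.
pose P (S : {set 'I_n}) := i \in S.
rewrite (eq_bigl (fun f => incr_seq f && P [set x in codom f])); last first.
  by move=> f; rewrite /P inE.
by rewrite sum_incr_minors //; apply: eq_bigl => S; rewrite andbC.
Qed.

Lemma mxrank_replace_col (F : fieldType) m n (M : 'M[F]_(m, n)) i (v : 'cV[F]_m) :
  (\rank (replace_col M i v) <= (\rank M).+1)%N.
Proof.
have -> : replace_col M i v = M *m diag_mx (\row_b (b != i)%:R) + v *m delta_mx 0 i.
  apply/matrixP => a b; rewrite mul_mx_diag !mxE big_ord1 !mxE eqxx /=.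
  by case: eqP => _; rewrite ?mulr1 ?mulr0 ?addr0 ?add0r.
apply: leq_trans (mxrank_add _ _) _.
rewrite -[(\rank M).+1]addn1 leq_add ?mxrankM_maxl //.
by rewrite (leq_trans (mxrankM_maxr _ _)) ?mxrank_delta.
Qed.

Lemma mul_adj_mxE (R : comPzRingType) n p (M : 'M[R]_n) (V : 'M[R]_(n, p)) i j :
  (\adj M *m V) i j = \det (replace_col M i (col j V)).
Proof.
rewrite mxE (expand_det_col _ i); apply: eq_bigr => k _.
rewrite !mxE eqxx mulrC; congr (_ * (_ * \det _)).
by apply/matrixP => a b; rewrite !mxE eq_sym (negbTE (neq_lift _ _)).
Qed.

Definition addXmx_off (R : nzRingType) n (J : {set 'I_n}) (M : 'M[R]_n) :
    'M[{poly R}]_n :=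
  map_mx polyC M + diag_mx (\row_a (if a \in J then 0 else 'X)).

Lemma addXmx_off0 (R : nzRingType) n (M : 'M[R]_n) :
  addXmx_off set0 M = map_mx polyC M + 'X%:M.
Proof.
by congr (_ + _); apply/matrixP => a b; rewrite !mxE in_set0.
Qed.

Lemma replace_col_addXmx_off (R : nzRingType) n p (M : 'M[R]_n)
    (V : 'M[R]_(n, p)) i j :
  replace_col (addXmx_off set0 M) i (col j (map_mx polyC V)) =
  addXmx_off [set i] (replace_col M i (col j V)).
Proof.
apply/matrixP => a b; rewrite !mxE in_set0 inE.
by case: (eqVneq b i) => [->|bi]; case: (eqVneq a i) => [->|ai] //=;
  rewrite ?mulr0n ?addr0 // eq_sym (negbTE bi) mulr0n addr0.
Qed.

Lemma coef_det_addXmx_off (R : comNzRingType) n (J : {set 'I_n}) (M : 'M[R]_n) k :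
  (\det (addXmx_off J M))`_k =
  \sum_(S : {set 'I_n} | (J \subset S) && (#|~: S| == k)) \det (principal_mx S M).
Proof.
rewrite /addXmx_off det_add_diag coef_sum [RHS]big_mkcond; apply: eq_bigr => S _.
rewrite -map_principal_mx det_map_mx.
have [JS|/subsetPn [a aJ aS]] := boolP (J \subset S); last first.
  by rewrite (bigD1 a) ?inE //= aJ !mul0r coef0.
rewrite (eq_bigr (fun _ => 'X)); last first.
  by move=> a; rewrite inE => aS; case: ifP => // aJ; move: aS; rewrite (subsetP JS).
by rewrite prodr_const mulrC mul_polyC coefZ coefXn eq_sym; case: eqP;
  rewrite ?mulr1 ?mulr0.
Qed.

Definition adj_coef (R : comNzRingType) n (M : 'M[R]_n) k : 'M[R]_n :=
  map_mx (coefp k) (\adj (addXmx_off set0 M)).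

Lemma coef_det_addXmx (R : comNzRingType) n (M : 'M[R]_n) k :
  (\det (addXmx_off set0 M))`_k =
  \sum_(S : {set 'I_n} | #|~: S| == k) \det (principal_mx S M).
Proof. by rewrite coef_det_addXmx_off; apply: eq_bigl => S; rewrite sub0set. Qed.

Lemma coef_mulmx_polyC (R : comNzRingType) n p (Z : 'M[{poly R}]_n)
    (V : 'M[R]_(n, p)) k :
  map_mx (coefp k) (Z *m map_mx polyC V) = map_mx (coefp k) Z *m V.
Proof.
apply/matrixP => a b; rewrite !mxE /= coef_sum.
by apply: eq_bigr => l _; rewrite !mxE /= coefMC.
Qed.

Lemma adj_coef_mulmxE (R : comNzRingType) n p (M : 'M[R]_n) (V : 'M[R]_(n, p))
    k a b :
  (adj_coef M k *m V) a b =
  \sum_(S : {set 'I_n} | (a \in S) && (#|~: S| == k))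
     \det (principal_mx S (replace_col M a (col b V))).
Proof.
rewrite -coef_mulmx_polyC mxE /= mul_adj_mxE replace_col_addXmx_off.
by rewrite coef_det_addXmx_off; apply: eq_bigl => S; rewrite sub1set.
Qed.

Lemma adj_coef_rec (R : comNzRingType) n (M : 'M[R]_n) k :
  adj_coef M k *m M + (if k is k'.+1 then adj_coef M k' else 0) =
  ((\det (addXmx_off set0 M))`_k)%:M.
Proof.
have := congr1 (map_mx (coefp k)) (mul_adj_mx (addXmx_off set0 M)).
rewrite {2}addXmx_off0 mulmxDr mul_mx_scalar map_mxD coef_mulmx_polyC.
move/matrixP => adjE; apply/matrixP => a b; have := adjE a b.
rewrite ![in X in X -> _]mxE /= coefXM coefMn => abE.
by rewrite [RHS]mxE -abE; case: k {adjE abE} => [|k]; rewrite !mxE ?addr0.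
Qed.

Section RankDeficient.
Variables (F : fieldType) (n r : nat) (D : 'M[F]_n).
Hypothesis rankD : \rank D = r.

Lemma coef_det_addXmx_lt k :
  (k < n - r)%N -> (\det (addXmx_off set0 D))`_k = 0.
Proof.
move=> k_lt; rewrite coef_det_addXmx; apply: big1 => S /eqP cS.
by apply: det_principal_mx_rank; rewrite rankD; move: cS; rewrite cardsC_ord; lia.
Qed.

(* The entries of [adj_coef D k] are principal minors of order [n - k] of
   matrices of rank at most [r + 1]. *)
Lemma adj_coef_lt k : (k.+2 <= n - r)%N -> adj_coef D k = 0.
Proof.
move=> k_lt; apply/matrixP => a b; rewrite [RHS]mxE -[adj_coef D k]mulmx1.
rewrite adj_coef_mulmxE; apply: big1 => S /andP [_ /eqP cS].
apply: det_principal_mx_rank; apply: leq_ltn_trans (mxrank_replace_col _ _ _) _.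
by rewrite rankD; move: cS; rewrite cardsC_ord; lia.
Qed.

Hypothesis r_lt_n : (r < n)%N.

Lemma adj_coef_pred_mul : adj_coef D (n - r).-1 *m D = 0.
Proof.
have := adj_coef_rec D (n - r).-1.
rewrite coef_det_addXmx_lt ?prednK ?subn_gt0 // raddf0.
case E: (n - r).-1 => [|k]; first by rewrite addr0.
by rewrite (@adj_coef_lt k) ?addr0 //; move: E; rewrite -subn1; lia.
Qed.

Lemma adj_coef_mul_proj (P Y : 'M[F]_n) : D *m P = D -> P = D *m Y ->
  adj_coef D (n - r) *m D = (\det (addXmx_off set0 D))`_(n - r) *: P.
Proof.
move=> DP PDY; have s_gt0 : (0 < n - r)%N by rewrite subn_gt0.
have := adj_coef_rec D (n - r); rewrite -(prednK s_gt0) /= prednK // => recE.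
have predP : adj_coef D (n - r).-1 *m P = 0.
  by rewrite PDY mulmxA adj_coef_pred_mul mul0mx.
rewrite -{2}DP mulmxA -[adj_coef D _ *m D](addrK (adj_coef D (n - r).-1)) recE.
by rewrite mulmxBl mul_scalar_mx predP subr0.
Qed.
End RankDeficient.

Lemma det_addXmx_normal (C : numClosedFieldType) n (D : 'M[C]_n) :
  D \is normalmx ->
  exists2 mu : 'rV[C]_n,
    \det (addXmx_off set0 D) = \prod_i ('X + (mu 0 i)%:P) &
    (\rank D <= \rank (diag_mx mu))%N.
Proof.
move/orthomx_spectralP => DE.
set U := spectralmx D in DE; set mu := spectral_diag D in DE.
have U_unit : U \in unitmx by apply: spectral_unit.
exists mu; last by rewrite DE (leq_trans (mxrankM_maxl _ _)) ?mxrankM_maxr.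
have -> : addXmx_off set0 D = map_mx polyC (invmx U) *m
    (map_mx polyC (diag_mx mu) + 'X%:M) *m map_mx polyC U.
  rewrite addXmx_off0 mulmxDr mulmxDl -!map_mxM -DE; congr (_ + _).
  by rewrite mul_mx_scalar -scalemxAl -map_mxM mulVmx // map_mx1 scalemx1.
rewrite !det_mulmx mulrC mulrA -det_mulmx -map_mxM mulmxV // map_mx1 det1 mul1r.
have -> : map_mx polyC (diag_mx mu) + 'X%:M = diag_mx (\row_i ('X + (mu 0 i)%:P)).
  apply/matrixP => a b; rewrite !mxE; case: eqP => [->|] /=;
    by rewrite ?mulr1n ?mulr0n ?addr0 ?polyC0 // addrC.
by rewrite det_diag; apply: eq_bigr => i _; rewrite mxE.
Qed.

(* Exactly [n - rank D] eigenvalues of a normal matrix [D] vanish. *)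
Lemma coef_det_addXmx_normal_neq0 (C : numClosedFieldType) n (D : 'M[C]_n) :
  D \is normalmx -> (\det (addXmx_off set0 D))`_(n - \rank D) != 0.
Proof.
case/det_addXmx_normal => mu detE rank_le.
set Z := [set i | mu 0 i == 0].
have coefZ : (\det (addXmx_off set0 D))`_#|Z| != 0.
  rewrite detE (bigID (mem Z)) /= (eq_bigr (fun=> 'X)); last first.
    by move=> i; rewrite inE => /eqP ->; rewrite addr0.
  rewrite prodr_const coefXnM ltnn subnn -horner_coef0 horner_prod.
  by apply/prodf_neq0 => i; rewrite inE => mui; rewrite hornerD hornerX hornerC add0r.
have Z_le : (#|Z| <= n - \rank D)%N.
  have : (\rank D <= #|~: Z|)%N.
    apply: leq_trans rank_le (leq_trans (mxrank_diag_le _) _).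
    by apply: subset_leq_card; apply/subsetP => i; rewrite !inE.
  by have := cardsC Z; rewrite card_ord; lia.
suff <- : #|Z| = (n - \rank D)%N by [].
apply/eqP; rewrite eqn_leq Z_le leqNgt; apply: contra coefZ => Z_lt.
by rewrite (coef_det_addXmx_lt (erefl _) Z_lt).
Qed.

Lemma ctmxM (C : numClosedFieldType) m n p (X : 'M[C]_(m, n)) (Y : 'M[C]_(n, p)) :
  ctmx (X *m Y) = ctmx Y *m ctmx X.
Proof. by rewrite /ctmx map_mxM trmx_mul. Qed.

Lemma ctmxK (C : numClosedFieldType) m n (X : 'M[C]_(m, n)) : ctmx (ctmx X) = X.
Proof. by apply/matrixP => a b; rewrite /ctmx !mxE conjCK. Qed.

Lemma gram_normal (C : numClosedFieldType) m n (A : 'M[C]_(m, n)) :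
  ctmx A *m A \is normalmx.
Proof.
have herm : ((ctmx A *m A) ^t* )%sesqui = ctmx A *m A.
  have /matrixP herm : ctmx (ctmx A *m A) = ctmx A *m A by rewrite ctmxM ctmxK.
  by apply/matrixP => a b; rewrite -herm !mxE.
by apply/normalmxP; rewrite herm.
Qed.

Section MoorePenrose.
Variables (C : numClosedFieldType) (m n : nat).
Variables (A : 'M[C]_(m, n)) (X : 'M[C]_(n, m)).
Hypothesis AX : is_MP_inverse A X.

Lemma MP_gram_proj : ctmx A *m A *m (X *m A) = ctmx A *m A.
Proof. by case: AX => AXA _ _ _; rewrite -mulmxA (mulmxA A) AXA. Qed.

Lemma MP_proj_gram : X *m A = ctmx A *m A *m (X *m ctmx X).
Proof.
case: AX => AXA _ AXh XAh.
by rewrite -XAh ctmxM -{1}AXA ctmxM AXh !mulmxA.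
Qed.

Lemma MP_mxrank_gram : \rank (ctmx A *m A) = \rank A.
Proof.
case: AX => AXA _ AXh _; apply/eqP; rewrite eqn_leq mxrankM_maxr /=.
have AE : A = ctmx X *m (ctmx A *m A) by rewrite mulmxA -ctmxM AXh AXA.
by rewrite [X in (\rank X <= _)%N]AE mxrankM_maxr.
Qed.

End MoorePenrose.

Lemma coef_det_addXmx_d_r (C : numClosedFieldType) n r (M : 'M[C]_n) :
  (r <= n)%N -> (\det (addXmx_off set0 M))`_(n - r) = d_r r M.
Proof.
move=> r_le_n; rewrite coef_det_addXmx d_r_principal //.
apply: eq_bigl => S; rewrite cardsC_ord.
have := subset_leq_card (subsetT S); rewrite cardsT card_ord.
by move=> S_le; apply/eqP/eqP; lia.
Qed.

Lemma adj_coef_gram_mulE (C : numClosedFieldType) m n r (A : 'M[C]_(m, n)) i j :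
  (r <= n)%N ->
  (adj_coef (ctmx A *m A) (n - r) *m (ctmx A *m A)) i j = p_entry r A i j.
Proof.
move=> r_le_n; rewrite p_entry_principal // adj_coef_mulmxE.
apply: eq_bigl => S; rewrite cardsC_ord.
have := subset_leq_card (subsetT S); rewrite cardsT card_ord.
by move=> S_le; congr (_ && _); apply/eqP/eqP; lia.
Qed.

Unset Implicit Arguments.

Theorem corollary2p2 (C : numClosedFieldType) (m n r : nat)
    (A : 'M[C]_(m, n)) (Aplus : 'M[C]_(n, m)) :
  \rank A = r ->
  ((r < minn m n)%N \/ (r = m /\ (m < n)%N)) ->
  is_MP_inverse A Aplus ->
  forall i j : 'I_n,
    (Aplus *m A) i j = p_entry r A i j / d_r r (ctmx A *m A).
Proof.
move=> rankA r_small MP i j.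
have r_lt_n : (r < n)%N.
  by case: r_small => [/leq_trans -> //|[-> //]]; apply: geq_minr.
have rankD : \rank (ctmx A *m A) = r by rewrite (MP_mxrank_gram MP).
have d_r_neq0 : d_r r (ctmx A *m A) != 0.
  by rewrite -coef_det_addXmx_d_r 1?ltnW // -{1}rankD coef_det_addXmx_normal_neq0
    ?gram_normal.
have := adj_coef_mul_proj rankD r_lt_n (MP_gram_proj MP) (MP_proj_gram MP).
rewrite coef_det_addXmx_d_r 1?ltnW // => /matrixP /(_ i j).
by rewrite adj_coef_gram_mulE 1?ltnW // mxE => ->; rewrite mulrAC divff // mul1r.
Qed.
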